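(* Fix a protocol in the totally quasi-ordered population protocol model $\mathrm{POP}^{\precsim}$, with finite state set $Q$, totally ordered color set $\mathbb{D}$, and transition function $\delta:Q^2\times\{<,=,>\}\to Q^2$. Let $\to$ be its transition relation and $\le$ the subconfiguration relation described below. Then $\le$ is a well-quasi-order on configurations and $\to$ is compatible with $\le$; that is, (configurations, $\le$, $\to$) is a well-structured transition system.
   Context: In $\mathrm{POP}^{\precsim}$, a configuration with $n$ agents is a sequence $((q_1,d_1),\dots,(q_n,d_n))\in(Q\times\mathbb{D})^n$ with $d_1\le d_2\le\dots\le d_n$ (agents sorted by color; $q_i$ is the mutable state, $d_i$ the immutable hidden color). A transition chooses an ordered pair $(i,j)$ of distinct agents (initiator $i$, responder $j$) and replaces $(q_i,q_j)$ by $\delta(q_i,q_j,r)$, where $r\in\{<,=,>\}$ is the result of comparing $d_i$ with $d_j$; all other components are unchanged. The subconfiguration relation: for configurations $s=((q_i,d_i))_{i\le m}$ and $t=((q'_i,d'_i))_{i\le m'}$, $s\le t$ iff there is a strictly increasing $f:\{1,\dots,m\}\to\{1,\dots,m'\}$ with $q_i=q'_{f(i)}$ for all $i$ and, for all $i,j$, $d_i\le d_j$ iff $d'_{f(i)}\le d'_{f(j)}$. A well-quasi-order is a reflexive transitive relation such that every infinite sequence $x_0,x_1,\dots$ has $i<j$ with $x_i\le x_j$. Compatibility means: whenever $s\to s'$ and $s\le t$, there exists $t'$ with $t\to t'$ and $s'\le t'$. *)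

From mathcomp Require Import all_boot all_order.
Set Implicit Arguments. Unset Strict Implicit. Unset Printing Implicit Defensive.
Import Order.TTheory.
Local Open Scope order_scope.

Definition cmpD {disp : Order.disp_t} {D : orderType disp} (x y : D) : comparison :=
  if x < y then Lt else if x == y then Eq else Gt.

Definition is_config {disp : Order.disp_t} (Q : finType) (D : orderType disp)
  (s : seq (Q * D)) : Prop :=
  sorted (fun a b : Q * D => a.2 <= b.2) s.

Definition step {disp : Order.disp_t} (Q : finType) (D : orderType disp)
  (delta : Q -> Q -> comparison -> Q * Q) (s s' : seq (Q * D)) : Prop :=
  exists i j : 'I_(size s), i != j /\
    let ai := tnth (in_tuple s) i in
    let aj := tnth (in_tuple s) j in
    let qq := delta ai.1 aj.1 (cmpD ai.2 aj.2) in
    s' = [seq (if k == i then (qq.1, ai.2)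
               else if k == j then (qq.2, aj.2)
               else tnth (in_tuple s) k) | k <- enum 'I_(size s)].

Definition subconfig {disp : Order.disp_t} (Q : finType) (D : orderType disp)
  (s t : seq (Q * D)) : Prop :=
  exists f : 'I_(size s) -> 'I_(size t),
    (forall a b : 'I_(size s), (a < b)%N -> (f a < f b)%N) /\
    (forall a : 'I_(size s), (tnth (in_tuple s) a).1 = (tnth (in_tuple t) (f a)).1) /\
    (forall a b : 'I_(size s),
        ((tnth (in_tuple s) a).2 <= (tnth (in_tuple s) b).2) =
        ((tnth (in_tuple t) (f a)).2 <= (tnth (in_tuple t) (f b)).2)).

Definition wqo_on {T : Type} (P : T -> Prop) (R : T -> T -> Prop) : Prop :=
  (forall x, P x -> R x x) /\
  (forall x y z, P x -> P y -> P z -> R x y -> R y z -> R x z) /\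
  (forall u : nat -> T, (forall n, P (u n)) ->
     exists i j, (i < j)%N /\ R (u i) (u j)).

Definition compatible_on {T : Type} (P : T -> Prop) (R step : T -> T -> Prop) : Prop :=
  forall s s' t, P s -> P t -> step s s' -> R s t ->
    exists t', step t t' /\ R s' t'.

(* A configuration sorted by color is a word of color blocks, each block a word over Q, with
   strictly increasing block colors.  If the word of blocks of s embeds into that of t in
   Higman's ordering (taken twice over the finite alphabet Q), the selected agents of t have the
   states of s and the same relative order of colors, so s is a subconfiguration of t; Higman's
   lemma thus makes subconfig a wqo.  For compatibility, an embedding preserves states and color
   comparisons, so the images of the two interacting agents of s interact in t exactly as they
   do in s, and the same embedding still works after both fire. *)

From Stdlib Require Import Classical ClassicalEpsilon.
From mathcomp Require Import all_boot all_order zify.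
Set Implicit Arguments. Unset Strict Implicit. Unset Printing Implicit Defensive.
Import Order.TTheory.

Inductive emb {A : Type} (R : A -> A -> Prop) : seq A -> seq A -> Prop :=
  | emb_nil t : emb R [::] t
  | emb_skip y s t : emb R s t -> emb R s (y :: t)
  | emb_cons x y s t : R x y -> emb R s t -> emb R (x :: s) (y :: t).

Lemma emb_trans A (R : A -> A -> Prop) :
  (forall x y z, R x y -> R y z -> R x z) ->
  forall s t u, emb R s t -> emb R t u -> emb R s u.
Proof.
move=> R_trans s t u st tu; elim: tu s st => [u' | y t' u' _ IH | x y t' u' Rxy _ IH] s st.
- by inversion st; constructor.
- exact/emb_skip/IH.
- inversion st; subst; first constructor.
  + exact/emb_skip/IH.
  + by apply: emb_cons; [exact: R_trans Rxy | exact: IH].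
Qed.

Lemma emb_eq_subseq (T : eqType) (s t : seq T) : emb eq s t -> subseq s t.
Proof.
elim=> [t' | y s' t' _ IH | x _ s' t' <- _ IH]; first exact: sub0seq.
- exact: subseq_trans IH (subseq_cons t' y).
- by rewrite /= eqxx.
Qed.

Definition good {X : Type} (E : X -> X -> Prop) (u : nat -> X) :=
  exists i j, i < j /\ E (u i) (u j).

Definition bad {X : Type} (E : X -> X -> Prop) (u : nat -> X) :=
  forall i j, i < j -> ~ E (u i) (u j).

Lemma good_eq_fin (Q : finType) (u : nat -> Q) : good eq u.
Proof.
pose v (k : 'I_#|Q|.+1) := u k.
have /injectivePn[i [j ne_ij eq_vij]] : ~~ injectiveb v.
  by apply/injectiveP => /leq_card; rewrite card_ord ltnn.
case: (ltngtP i j) => [ij | ji | /val_inj eq_ij]; last by rewrite eq_ij eqxx in ne_ij.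
- by exists i, j.
- by exists j, i.
Qed.

Lemma ex_min_measure (Y : Type) (P : Y -> Prop) (nu : Y -> nat) :
  (exists y, P y) -> exists y, P y /\ forall y', P y' -> nu y <= nu y'.
Proof.
move=> [y0 Py0]; move: {2}(nu y0) (leqnn (nu y0)) => k.
elim: k y0 Py0 => [|k IH] y Py le_y.
  by exists y; split=> // y' _; move: le_y; lia.
case: (classic (exists y', P y' /\ nu y' <= k)) => [[y' [Py' le_y']] | no_y'].
  exact: IH Py' le_y'.
exists y; split=> // y' Py'; rewrite leqNgt; apply/negP => lt_y'.
by apply: no_y'; exists y'; split=> //; move: lt_y' le_y; lia.
Qed.

Section MinimalBadSequence.
Variables (X : Type) (E : X -> X -> Prop) (mu : X -> nat).

Definition agree (v : nat -> X) n (w : nat -> X) := forall k, k < n -> w k = v k.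

Definition minimal_at v n w :=
  [/\ bad E w, agree v n w &
      forall w', bad E w' -> agree v n w' -> mu (w n) <= mu (w' n)].

(* Nash-Williams' construction: [minimize u0 n.+1] keeps the first [n] terms of
   [minimize u0 n] and minimizes the measure of the [n]-th term among bad sequences;
   the diagonal [fun n => minimize u0 n.+1 n] is then a minimal bad sequence. *)
Fixpoint minimize (u0 : nat -> X) n : nat -> X :=
  if n is n'.+1 then epsilon (inhabits u0) (minimal_at (minimize u0 n') n')
  else u0.

Lemma minimal_bad_sequence u0 : bad E u0 ->
  exists m, bad E m /\ forall n w, bad E w -> agree m n w -> mu (m n) <= mu (w n).
Proof.
move=> bad_u0; pose B := minimize u0.
have B_min n : bad E (B n) -> minimal_at (B n) n (B n.+1).
  move=> bad_Bn; apply: epsilon_spec.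
  have [|w [[bad_w agree_w] min_w]] :=
    @ex_min_measure _ (fun w => bad E w /\ agree (B n) n w) (fun w => mu (w n)).
    by exists (B n).
  by exists w; split=> // w' bad_w' /(conj bad_w'); apply: min_w.
have bad_B n : bad E (B n) by elim: n => // n IH; case: (B_min n IH).
have agree_B n k : k <= n -> agree (B k) k (B n).
  elim: n => [|n IH]; first by rewrite leqn0 => /eqP ->.
  rewrite leq_eqVlt => /orP[/eqP -> // | lt_kn] i lt_ik.
  case: (B_min n (bad_B n)) => _ agree_n _.
  by rewrite agree_n ?(IH lt_kn) // (leq_trans lt_ik lt_kn).
have diag k n : k < n -> B n k = B k.+1 k by move=> lt_kn; apply: agree_B.
exists (fun n => B n.+1 n); split.
- by move=> i j lt_ij; rewrite -(diag i j.+1) //; [exact: bad_B | exact: ltnW].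
- move=> n w bad_w agree_w; case: (B_min n (bad_B n)) => _ _; apply=> // k lt_kn.
  by rewrite agree_w // diag.
Qed.

End MinimalBadSequence.

Section Higman.
Variables (A : Type) (R : A -> A -> Prop).
Hypothesis R_trans : forall x y z, R x y -> R y z -> R x z.
Hypothesis R_good : forall u : nat -> A, good R u.

Lemma good_eventually_dominated (a : nat -> A) :
  exists N, forall i, N <= i -> exists j, i < j /\ R (a i) (a j).
Proof.
apply: NNPP => no_N.
have terminal N : exists i, N <= i /\ forall j, i < j -> ~ R (a i) (a j).
  apply: NNPP => no_i; apply: no_N; exists N => i le_Ni; apply: NNPP => no_j.
  by apply: no_i; exists i; split=> // j lt_ij Rij; apply: no_j; exists j.
have [t tP] := choice _ terminal.
pose h k := iter k (fun i => t i.+1) (t 0).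
have h_incr : {homo h : k l / k < l}.
  by apply: homo_ltn => [y x z | k]; [exact: ltn_trans | exact: (tP _).1].
have h_terminal k j : h k < j -> ~ R (a (h k)) (a j) by case: k => [|k]; exact: (tP _).2.
have [i [j [lt_ij Rij]]] := R_good (a \o h).
exact: h_terminal (h_incr _ _ lt_ij) Rij.
Qed.

Lemma good_chain (a : nat -> A) : exists g : nat -> nat,
  {homo g : k l / k < l} /\ {homo a \o g : k l / k < l >-> R k l}.
Proof.
have [N dom_N] := good_eventually_dominated a.
have [nx nxP] : exists nx : nat -> nat, forall i, N <= i -> i < nx i /\ R (a i) (a (nx i)).
  apply: (choice (fun i j => N <= i -> i < j /\ R (a i) (a j))) => i.
  by case: (leqP N i) => [/dom_N[j dom_j] | _]; [exists j | exists 0].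
pose g k := iter k nx N.
have g_ge k : N <= g k.
  by elim: k => //= k IH; exact: leq_trans IH (ltnW (nxP _ IH).1).
exists g; split; apply: homo_ltn.
- exact: ltn_trans.
- by move=> k; exact: (nxP _ (g_ge k)).1.
- by move=> y x z; exact: R_trans.
- by move=> k; exact: (nxP _ (g_ge k)).2.
Qed.

Theorem higman (u : nat -> seq A) : good (emb R) u.
Proof.
apply: NNPP => not_good.
have bad_u : bad (emb R) u by move=> i j lt_ij uij; apply: not_good; exists i, j.
have [m [bad_m min_m]] := minimal_bad_sequence size bad_u.
have m_cons n : exists x v, m n = x :: v.
  case E: (m n) => [|x v]; last by exists x, v.
  by case: (bad_m n n.+1 (ltnSn n)); rewrite E; constructor.
have [hd hdP] := choice _ m_cons; have [tl tlP] := choice _ hdP.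
have [g [g_incr g_chain]] := good_chain hd.
(* Cutting the heads off the [m (g k)] keeps the sequence bad, since the heads form an
   [R]-chain, but makes it smaller than [m] at index [g 0]. *)
pose w k := if k < g 0 then m k else tl (g (k - g 0)).
have g0_le k : g 0 <= g k by case: k => // k; exact/ltnW/g_incr.
have bad_w : bad (emb R) w.
  move=> i j lt_ij; rewrite /w; case: ifP => lt_i; case: ifP => lt_j.
  - exact: bad_m.
  - move=> emb_ij; apply: (bad_m i (g (j - g 0))); first exact: leq_trans lt_i (g0_le _).
    by rewrite [m (g _)]tlP; apply: emb_skip.
  - by rewrite (ltn_trans lt_ij lt_j) in lt_i.
  - move=> emb_ij; have lt_ij' : i - g 0 < j - g 0 by move: lt_i lt_j lt_ij; lia.
    apply: (bad_m _ _ (g_incr _ _ lt_ij')).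
    by rewrite !tlP; apply: emb_cons => //; exact: g_chain.
have agree_w : agree m (g 0) w by move=> k lt_k; rewrite /w lt_k.
by have := min_m (g 0) w bad_w agree_w; rewrite /w ltnn subnn tlP /= ltnn.
Qed.

End Higman.

Local Open Scope order_scope.

Section Patterns.
Variables (disp : Order.disp_t) (D : orderType disp).

(* Two sequences are order-isomorphic iff they have the same [le_pattern]. *)
Definition le_pattern (x : seq D) : seq (seq bool) := [seq [seq a <= b | b <- x] | a <- x].

Lemma size_le_pattern x : size (le_pattern x) = size x.
Proof. exact: size_map. Qed.

Lemma nth_le_pattern x0 x a b : (a < size x)%N -> (b < size x)%N ->
  nth false (nth [::] (le_pattern x) a) b = (nth x0 x a <= nth x0 x b).
Proof. by move=> ha hb; rewrite (nth_map x0) // (nth_map x0). Qed.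

Lemma le_pattern_nseq_cat n c x : all (fun b => c < b) x ->
  le_pattern (nseq n c ++ x) =
    nseq n (nseq (n + size x) true) ++ [seq nseq n false ++ r | r <- le_pattern x].
Proof.
move=> /allP gt_c; rewrite /le_pattern map_cat map_nseq.
have const_x (v : bool) (F : D -> bool) :
    (forall b, b \in x -> F b = v) -> map F x = nseq (size x) v.
  by move=> /eq_in_map ->; elim: (x) => //= b y ->.
congr (nseq _ _ ++ _).
  by rewrite map_cat map_nseq lexx nseqD (const_x true) // => b /gt_c /ltW.
rewrite -map_comp; apply/eq_in_map => a /gt_c lt_ca /=.
by rewrite map_cat map_nseq lt_geF.
Qed.

Lemma le_pattern_nseq_cat_eq n c d x y :
  all (fun b => c < b) x -> all (fun b => d < b) y -> le_pattern x = le_pattern y ->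
  le_pattern (nseq n c ++ x) = le_pattern (nseq n d ++ y).
Proof.
move=> gt_c gt_d eq_xy; rewrite !le_pattern_nseq_cat // eq_xy.
by rewrite -(size_le_pattern x) eq_xy size_le_pattern.
Qed.

End Patterns.

Section Configurations.
Variables (disp : Order.disp_t) (Q : finType) (D : orderType disp).
Implicit Types s t : seq (Q * D).

Lemma subconfig_refl s : subconfig s s.
Proof. by exists id. Qed.

Lemma subconfig_trans s t u : subconfig s t -> subconfig t u -> subconfig s u.
Proof.
move=> [f [f_incr [f_state f_col]]] [g [g_incr [g_state g_col]]].
exists (g \o f); split; [|split] => [a b lt_ab | a | a b] /=.
- exact/g_incr/f_incr.
- by rewrite f_state g_state.
- by rewrite f_col g_col.
Qed.

(* [subconfig] read on nat indices, avoiding the dependent types ['I_(size s)]. *)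
Definition index_embedding s t (g : nat -> nat) :=
  [/\ forall a b, (a < b < size s)%N -> (g a < g b)%N,
      forall a, (a < size s)%N -> (g a < size t)%N,
      forall x0 a, (a < size s)%N -> (nth x0 s a).1 = (nth x0 t (g a)).1 &
      forall x0 a b, (a < size s)%N -> (b < size s)%N ->
        ((nth x0 s a).2 <= (nth x0 s b).2) = ((nth x0 t (g a)).2 <= (nth x0 t (g b)).2)].

Lemma index_embedding_subconfig s t g : index_embedding s t g -> subconfig s t.
Proof.
move=> [g_incr g_range g_state g_col].
exists (fun a : 'I_(size s) => Ordinal (g_range a (ltn_ord a))).
split; [|split] => [a b lt_ab | a | a b] /=; first by apply: g_incr; rewrite lt_ab ltn_ord.
all: have x0 := tnth (in_tuple s) a; rewrite !(tnth_nth x0) /=.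
- exact: g_state.
- exact: g_col.
Qed.

Lemma subconfig_index_embedding s t : subconfig s t -> exists g, index_embedding s t g.
Proof.
move=> [f [f_incr [f_state f_col]]].
pose g a := oapp (val \o f) 0 (insub a : option 'I_(size s)).
have gE a (lt_a : (a < size s)%N) : g a = f (Ordinal lt_a) by rewrite /g insubT.
exists g; split=> [a b /andP[lt_ab lt_b] | a lt_a | x0 a lt_a | x0 a b lt_a lt_b].
- by rewrite (gE _ (ltn_trans lt_ab lt_b)) (gE _ lt_b); exact: f_incr.
- by rewrite (gE _ lt_a).
- by have := f_state (Ordinal lt_a); rewrite (gE _ lt_a) !(tnth_nth x0).
- have := f_col (Ordinal lt_a) (Ordinal lt_b).
  by rewrite (gE _ lt_a) (gE _ lt_b) !(tnth_nth x0).
Qed.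

Lemma index_embedding_inj s t g a b : index_embedding s t g ->
  (a < size s)%N -> (b < size s)%N -> (g a == g b) = (a == b).
Proof.
move=> [g_incr _ _ _] lt_a lt_b; apply/eqP/eqP => [eq_g | -> //].
case: (ltngtP a b) => // [lt_ab | lt_ba].
- by have := g_incr a b; rewrite lt_ab lt_b eq_g ltnn => /(_ isT).
- by have := g_incr b a; rewrite lt_ba lt_a eq_g ltnn => /(_ isT).
Qed.

Definition embeds s t := exists2 t0, subseq t0 t &
  map fst t0 = map fst s /\ le_pattern (map snd t0) = le_pattern (map snd s).

Lemma embeds_subconfig s t : embeds s t -> subconfig s t.
Proof.
move=> [_ /subseqP[m size_m ->] [eq_state eq_pattern]].
pose idx := mask m (iota 0 (size t)).
have t0E x0 : mask m t = map (nth x0 t) idx by rewrite map_mask map_nth_iota0 ?take_size.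
have size_t0 : size (mask m t) = size s by rewrite -(size_map fst) eq_state size_map.
have size_idx : size idx = size s by rewrite -size_t0 !size_mask ?size_iota.
have idx_sorted : sorted ltn idx by apply/sorted_mask/iota_ltn_sorted; exact: ltn_trans.
apply: (@index_embedding_subconfig _ _ (nth 0 idx)).
split=> [a b /andP[lt_ab lt_b] | a lt_a | x0 a lt_a | x0 a b lt_a lt_b].
- by apply: (sorted_ltn_nth ltn_trans); rewrite ?inE ?size_idx // (ltn_trans lt_ab).
- have /mem_mask : nth 0 idx a \in idx by apply: mem_nth; rewrite size_idx.
  by rewrite mem_iota add0n => /andP[].
- by rewrite -(nth_map x0 x0.1 _ lt_a) -eq_state (t0E x0) -map_comp (nth_map 0) ?size_idx.
- transitivity (nth false (nth [::] (le_pattern (map snd s)) a) b).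
    by rewrite (nth_le_pattern x0.2) ?size_map // !(nth_map x0).
  rewrite -eq_pattern (nth_le_pattern x0.2) ?size_map ?size_t0 // (t0E x0) -map_comp.
  by rewrite !(nth_map 0) ?size_idx.
Qed.

Definition block (c : D) (B : seq Q) := [seq (q, c) | q <- B].

Lemma states_block c B : map fst (block c B) = B.
Proof. by elim: B => //= q B ->. Qed.

Lemma colors_block c B : map snd (block c B) = nseq (size B) c.
Proof. by elim: B => //= q B ->. Qed.

Inductive color_blocks : seq (Q * D) -> seq (seq Q) -> Prop :=
  | color_blocks_nil : color_blocks [::] [::]
  | color_blocks_cons c B s bs : all (fun z => c < z.2) s -> color_blocks s bs ->
      color_blocks (block c B ++ s) (B :: bs).

Lemma color_blocks_nilE t : color_blocks t [::] -> t = [::].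
Proof. by move=> blocks_t; inversion blocks_t. Qed.

Lemma color_blocks_consE t C cs : color_blocks t (C :: cs) ->
  exists d t', [/\ t = block d C ++ t', all (fun z => d < z.2) t' & color_blocks t' cs].
Proof. by move=> blocks_t; inversion blocks_t; do 2 eexists. Qed.

Lemma sorted_color_blocks z s : is_config (z :: s) ->
  exists B t bs, [/\ z :: s = block z.2 B ++ t, all (fun y => z.2 < y.2) t & color_blocks t bs].
Proof.
rewrite /is_config; elim: s z => [|y s IH] z /=.
  by move=> _; exists [:: z.1], [::], [::]; split; [rewrite [z]surjective_pairing | | constructor].
case/andP=> le_zy sorted_ys; have [B [t [bs [ysE gt_y blocks_t]]]] := IH y sorted_ys.
case: (eqVneq z.2 y.2) => [eq_zy | ne_zy].
  exists (z.1 :: B), t, bs; rewrite eq_zy; split=> //.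
  by rewrite ysE -eq_zy [z]surjective_pairing.
have lt_zy : z.2 < y.2 by rewrite lt_neqAle ne_zy le_zy.
exists [:: z.1], (y :: s), (B :: bs); split; first by rewrite [z]surjective_pairing.
- have le_color_trans : transitive (fun a b : Q * D => a.2 <= b.2).
    by move=> ? ? ?; exact: le_trans.
  rewrite /= lt_zy; apply/allP => x /(allP (order_path_min le_color_trans sorted_ys)).
  exact: lt_le_trans.
- by rewrite ysE; constructor.
Qed.

Lemma config_color_blocks s : is_config s -> exists bs, color_blocks s bs.
Proof.
case: s => [|z s]; first by exists [::]; constructor.
by move/sorted_color_blocks=> [B [t [bs [-> gt_z blocks_t]]]]; exists (B :: bs); constructor.
Qed.

Lemma color_blocks_embeds bs cs : emb (emb eq) bs cs ->
  forall s t, color_blocks s bs -> color_blocks t cs -> embeds s t.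
Proof.
elim=> [cs' | C bs' cs' _ IH | B C bs' cs' emb_BC _ IH] s t blocks_s blocks_t.
- by rewrite (color_blocks_nilE blocks_s); exists [::]; rewrite ?sub0seq.
- have [d [t' [-> _ blocks_t']]] := color_blocks_consE blocks_t.
  have [t0 sub_t0 eq_t0] := IH _ _ blocks_s blocks_t'.
  by exists t0 => //; apply: subseq_trans sub_t0 (suffix_subseq _ _).
- have [c [s' [-> gt_c blocks_s']]] := color_blocks_consE blocks_s.
  have [d [t' [-> gt_d blocks_t']]] := color_blocks_consE blocks_t.
  have [t0 sub_t0 [eq_states eq_pattern]] := IH _ _ blocks_s' blocks_t'.
  exists (block d B ++ t0).
    by apply: cat_subseq => //; apply/map_subseq/emb_eq_subseq.
  rewrite !map_cat !states_block !colors_block eq_states; split=> //.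
  apply: le_pattern_nseq_cat_eq => //; rewrite all_map.
  - by apply/allP => z /(mem_subseq sub_t0) /(allP gt_d).
  - exact: gt_c.
Qed.

Lemma good_subconfig (u : nat -> seq (Q * D)) :
  (forall n, is_config (u n)) -> good (@subconfig _ Q D) u.
Proof.
move=> config_u; have [bs blocks_u] := choice _ (fun n => config_color_blocks (config_u n)).
have good_words := higman (@etrans Q) (@good_eq_fin Q).
have [i [j [lt_ij emb_ij]]] := higman (emb_trans (@etrans Q)) good_words bs.
by exists i, j; split=> //; apply/embeds_subconfig/(color_blocks_embeds emb_ij).
Qed.

End Configurations.

Lemma cmpD_le_eq disp (D : orderType disp) (x y x' y' : D) :
  (x <= y) = (x' <= y') -> (y <= x) = (y' <= x') -> cmpD x y = cmpD x' y'.
Proof. by move=> le_xy le_yx; rewrite /cmpD !ltNge !eq_le le_xy le_yx. Qed.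

Section Compatibility.
Variables (disp : Order.disp_t) (Q : finType) (D : orderType disp).
Variable delta : Q -> Q -> comparison -> Q * Q.
Implicit Types s t : seq (Q * D).

Definition interaction s (i j : 'I_(size s)) : Q * Q :=
  let ai := tnth (in_tuple s) i in
  let aj := tnth (in_tuple s) j in
  delta ai.1 aj.1 (cmpD ai.2 aj.2).

Definition fire s (i j : 'I_(size s)) : seq (Q * D) :=
  [seq if k == i then ((interaction i j).1, (tnth (in_tuple s) i).2)
       else if k == j then ((interaction i j).2, (tnth (in_tuple s) j).2)
       else tnth (in_tuple s) k | k <- enum 'I_(size s)].

Lemma interactionE x0 s (i j : 'I_(size s)) :
  interaction i j = delta (nth x0 s i).1 (nth x0 s j).1 (cmpD (nth x0 s i).2 (nth x0 s j).2).
Proof. by rewrite /interaction !(tnth_nth x0). Qed.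

Lemma size_fire s (i j : 'I_(size s)) : size (fire i j) = size s.
Proof. by rewrite size_map size_enum_ord. Qed.

Lemma nth_fire x0 s (i j : 'I_(size s)) a : (a < size s)%N ->
  nth x0 (fire i j) a =
    if a == i then ((interaction i j).1, (nth x0 s i).2)
    else if a == j then ((interaction i j).2, (nth x0 s j).2)
    else nth x0 s a.
Proof.
move=> lt_a; rewrite (nth_map i) ?size_enum_ord //.
by rewrite -[in RHS](nth_enum_ord i lt_a) !(tnth_nth x0).
Qed.

Lemma nth_fire_color x0 s (i j : 'I_(size s)) a : (a < size s)%N ->
  (nth x0 (fire i j) a).2 = (nth x0 s a).2.
Proof. by move=> lt_a; rewrite nth_fire //; do 2 case: eqP => [-> //|_]. Qed.

Lemma index_embedding_fire s t g (i j : 'I_(size s)) (i' j' : 'I_(size t)) :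
  index_embedding s t g -> g i = i' -> g j = j' ->
  index_embedding (fire i j) (fire i' j') g.
Proof.
move=> emb_g gi gj; have g_eq := index_embedding_inj emb_g.
case: emb_g => g_incr g_range g_state g_col.
have same_interaction : interaction i' j' = interaction i j.
  have x0 := tnth (in_tuple s) i.
  rewrite !(interactionE x0) -gi -gj !g_state //.
  by rewrite (cmpD_le_eq (g_col _ _ _ _ _) (g_col _ _ _ _ _)).
split=> [a b | a | x0 a | x0 a b]; rewrite !size_fire; [exact: g_incr | exact: g_range | |].
- move=> lt_a; rewrite !nth_fire ?g_range // -gi -gj !g_eq // same_interaction.
  by do 2 case: eqP => // _; exact: g_state.
- by move=> lt_a lt_b; rewrite !nth_fire_color ?g_range //; exact: g_col.
Qed.

Lemma compatible_subconfig :
  compatible_on (@is_config _ Q D) (@subconfig _ Q D) (@step _ Q D delta).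
Proof.
move=> s s' t _ _ [i [j [ne_ij s'E]]] /subconfig_index_embedding[g emb_g].
change (s' = fire i j) in s'E; subst s'.
case: (emb_g) => _ g_range _ _.
pose i' := Ordinal (g_range i (ltn_ord i)); pose j' := Ordinal (g_range j (ltn_ord j)).
exists (fire i' j'); split.
  by exists i', j'; rewrite -val_eqE /= (index_embedding_inj emb_g).
exact: index_embedding_subconfig (index_embedding_fire emb_g _ _).
Qed.

End Compatibility.

Theorem lemma8 (disp : Order.disp_t) (Q : finType) (D : orderType disp)
  (delta : Q -> Q -> comparison -> Q * Q) :
  wqo_on (@is_config disp Q D) (@subconfig disp Q D) /\
  compatible_on (@is_config disp Q D) (@subconfig disp Q D) (@step disp Q D delta).
Proof.
split; last exact: compatible_subconfig.
split; [|split].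
- by move=> s _; exact: subconfig_refl.
- by move=> s t u _ _ _; exact: subconfig_trans.
- exact: good_subconfig.
Qed.
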